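(* (i) There is an exactly computable model — a family of binary observables $X_\epsilon\in\{-1,+1\}$ with nonzero ideal variance $v(0)>0$ and $\mathbb E[X_\epsilon]=\mu_0+\alpha\epsilon$ exactly ($\mu_0\in(-1,1)$, $\alpha\ne0$), estimated with a first-order Richardson rule with independent sampling — for which the positive crossing of the MSE difference satisfies \[ \epsilon^*(B)=\left(\frac{K_0}{\alpha^2}\right)^{1/2}B^{-1/2}+O(B^{-1}). \] (ii) There is an exactly computable deterministic-limit model — a family of binary observables $X_\epsilon\in\{-1,+1\}$ with $\mathbb E[X_\epsilon]=1-\kappa\epsilon$, $\kappa>0$, estimated with a first-order Richardson rule with scale factors $(1,a)$, $a>1$, and independent sampling — for which \[ \epsilon^*(B)=\frac{K_1}{\kappa^2}B^{-1}+O(B^{-2}). \] Thus both exponents $B^{-1/2}$ and $B^{-1}$, together with their leading constants, are attained.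
   Context: A first-order Richardson rule uses scale factors $1=\lambda_0<\lambda_1$ and coefficients $c_0,c_1$ with $c_0+c_1=1$, $c_0+c_1\lambda_1=0$ (for scales $(1,a)$: $c_0=a/(a-1)$, $c_1=-1/(a-1)$), and allocation fractions $\pi_0,\pi_1>0$ summing to $1$. With budget $B$, the unmitigated estimator is the mean of $B$ shots at noise $\epsilon$, and the ZNE estimator is $c_0\widehat\mu(\epsilon)+c_1\widehat\mu(\lambda_1\epsilon)$ with $\widehat\mu(\lambda_j\epsilon)$ the mean of $\pi_jB$ independent shots at noise $\lambda_j\epsilon$. The MSE difference is $\Delta_{\mathrm{MSE}}(\epsilon,B)=\mathrm{MSE}_{\mathrm{noisy}}-\mathrm{MSE}_{\mathrm{ZNE}}$ with $\mathrm{MSE}=\mathbb E[(\widehat\mu-\mu(0))^2]$, and $\epsilon^*(B)$ is its positive (nonzero) crossing. With $v(\epsilon)=\mathrm{Var}(X_\epsilon)$ and $v(\epsilon)=\nu\epsilon^q+\ldots$ the leading small-noise behavior, the variance-penalty constants are $K_q=\nu[\sum_jc_j^2\lambda_j^q/\pi_j-1]$; thus $K_0=v(0)[\sum_jc_j^2/\pi_j-1]$ in (i), and $K_1=2\kappa[\sum_jc_j^2\lambda_j/\pi_j-1]$ in (ii). *)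

From Stdlib Require Import Reals.
Open Scope R_scope.

(* First-order Richardson rule with scales (1, l), l > 1. *)
Definition rc0 (l : R) : R := l / (l - 1).
Definition rc1 (l : R) : R := - 1 / (l - 1).

(* A binary observable X_eps in {-1,+1}: its law is given by
   p eps = P(X_eps = +1), so P(X_eps = -1) = 1 - p eps. *)
Definition bmean (p : R -> R) (e : R) : R :=
  1 * p e + (-1) * (1 - p e).
Definition bvar (p : R -> R) (e : R) : R :=
  (1 - bmean p e) ^ 2 * p e + (-1 - bmean p e) ^ 2 * (1 - p e).

(* MSE of the unmitigated estimator: mean of B independent shots at noise e,
   target mu(0) = bmean p 0 (bias^2 + variance of the sample mean). *)
Definition mse_noisy (p : R -> R) (e B : R) : R :=
  (bmean p e - bmean p 0) ^ 2 + bvar p e / B.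

(* MSE of the ZNE estimator c0 muhat(e) + c1 muhat(l e), with pi0 B shots at
   noise e and (1 - pi0) B independent shots at noise l e. *)
Definition mse_zne (p : R -> R) (l pi0 e B : R) : R :=
  (rc0 l * bmean p e + rc1 l * bmean p (l * e) - bmean p 0) ^ 2
  + rc0 l ^ 2 * bvar p e / (pi0 * B)
  + rc1 l ^ 2 * bvar p (l * e) / ((1 - pi0) * B).

Definition delta_mse (p : R -> R) (l pi0 e B : R) : R :=
  mse_noisy p e B - mse_zne p l pi0 e B.

(* The model is defined for noise levels in [0, emax]; a noise level e is
   admissible for the rule when both e and l e lie in that range. *)
Definition admissible (l emax e : R) : Prop := 0 <= e /\ l * e <= emax.

Definition pos_crossing (p : R -> R) (l pi0 emax B e : R) : Prop :=
  0 < e /\ admissible l emax e /\ delta_mse p l pi0 e B = 0 /\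
  forall e', 0 < e' -> admissible l emax e' -> delta_mse p l pi0 e' B = 0 -> e' = e.

Definition K0 (p : R -> R) (l pi0 : R) : R :=
  bvar p 0 * (rc0 l ^ 2 / pi0 + rc1 l ^ 2 / (1 - pi0) - 1).
Definition K1 (kappa l pi0 : R) : R :=
  2 * kappa * (rc0 l ^ 2 * 1 / pi0 + rc1 l ^ 2 * l / (1 - pi0) - 1).

(* Both models have exactly linear means, so the first-order Richardson rule
   is unbiased and Delta_MSE is the squared bias of the noisy estimator minus
   the variance penalty divided by B.  For a {-1,+1}-valued observable the
   variance is 1 - mu^2, so B * Delta_MSE is an explicit quadratic in eps.
   With scales (1, 2) and equal allocation:
   (i)  mu(eps) = eps, v(0) = 1, B * Delta = (B + 15) eps^2 - 9, whose positive
        root sqrt (9 / (B + 15)) is sqrt (K0 / alpha^2) / sqrt B + O(1/B);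
   (ii) mu(eps) = 1 - eps, v(eps) = 2 eps - eps^2 vanishes at 0, and
        B * Delta = eps ((B + 15) eps - 22), whose positive root 22 / (B + 15)
        is K1 / (kappa^2 B) + O(1/B^2). *)

From Stdlib Require Import Reals Lra Psatz.
Open Scope R_scope.

Lemma bvar_binary p e : bvar p e = 1 - bmean p e ^ 2.
Proof. unfold bvar, bmean; ring. Qed.

Lemma richardson_exact_linear l m0 alpha e :
  1 < l -> rc0 l * (m0 + alpha * e) + rc1 l * (m0 + alpha * (l * e)) = m0.
Proof. intros Hl; unfold rc0, rc1; field; lra. Qed.

Lemma delta_mse_linear_mean p l pi0 e B m0 alpha :
  1 < l -> (forall x, bmean p x = m0 + alpha * x) ->
  delta_mse p l pi0 e B =
  (alpha * e) ^ 2 + bvar p e / B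
  - rc0 l ^ 2 * bvar p e / (pi0 * B) - rc1 l ^ 2 * bvar p (l * e) / ((1 - pi0) * B).
Proof.
  intros Hl Hmean; unfold delta_mse, mse_noisy, mse_zne.
  rewrite !Hmean, richardson_exact_linear by exact Hl.
  ring.
Qed.

Lemma div_pos_eq0 x B : 0 < B -> x / B = 0 -> x = 0.
Proof.
  intros HB Hx; replace x with (x / B * B) by (field; lra).
  rewrite Hx; ring.
Qed.

Lemma pos_crossing_intro p l pi0 emax B e :
  0 < e -> l * e <= emax -> delta_mse p l pi0 e B = 0 ->
  (forall e', 0 < e' -> delta_mse p l pi0 e' B = 0 -> e' = e) ->
  pos_crossing p l pi0 emax B e.
Proof.
  intros He Hle Hzero Huniq.
  repeat split; try lra; trivial.
  intros e' He' _; apply Huniq, He'.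
Qed.

Lemma sqr_eq_pos_root c k x :
  0 < c -> 0 < x -> x ^ 2 * c - k = 0 -> x = sqrt (k / c).
Proof.
  intros Hc Hx Hroot.
  assert (k / c = x * x) as -> by (replace k with (x ^ 2 * c) by lra; field; lra).
  symmetry; apply sqrt_lem_1; nra.
Qed.

Lemma sqr_eq_lin_pos_root c k x :
  0 < c -> 0 < x -> x ^ 2 * c - k * x = 0 -> x = k / c.
Proof.
  intros Hc Hx Hroot.
  apply (Rmult_eq_reg_r (x * c)); [| nra].
  field_simplify; nra.
Qed.

Lemma pos_root_sqr c k : 0 < c -> 0 <= k -> sqrt (k / c) ^ 2 * c - k = 0.
Proof.
  intros Hc Hk; rewrite <- Rsqr_pow2, Rsqr_sqrt.
  - field; lra.
  - apply Rle_mult_inv_pos; lra.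
Qed.

Lemma inv_sqrt_shift_bound B c :
  1 <= B -> 0 <= c -> Rabs (/ sqrt (B + c) - / sqrt B) <= c / B.
Proof.
  intros HB Hc.
  assert (Hs : 1 <= sqrt B) by (rewrite <- sqrt_1; apply sqrt_le_1_alt; lra).
  assert (Hss : sqrt B * sqrt B = B) by (apply sqrt_sqrt; lra).
  assert (Htt : sqrt (B + c) * sqrt (B + c) = B + c) by (apply sqrt_sqrt; lra).
  pose proof (sqrt_pos (B + c)) as Ht.
  set (s := sqrt B) in *; set (t := sqrt (B + c)) in *.
  assert (Hst : s <= t) by nra.
  assert (Hdiff : / t - / s = - ((t - s) / (s * t))) by (field; lra).
  assert (Hconj : (t - s) * (t + s) = c) by nra.
  rewrite Hdiff, Rabs_Ropp, Rabs_right.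
  - rewrite <- Hss.
    apply (Rmult_le_reg_r (s * s * t)); [nra|].
    field_simplify; [nra | lra | lra].
  - apply Rle_ge, Rle_mult_inv_pos; nra.
Qed.

Lemma inv_shift_bound B c k :
  0 < B -> 0 <= c -> 0 <= k -> Rabs (k / (B + c) - k / B) <= k * c / B ^ 2.
Proof.
  intros HB Hc Hk.
  assert (Hdiff : k / (B + c) - k / B = - (k * c / (B * (B + c)))) by (field; lra).
  rewrite Hdiff, Rabs_Ropp, Rabs_right.
  - unfold Rdiv; apply Rmult_le_compat_l; [nra|].
    apply Rinv_le_contravar; nra.
  - apply Rle_ge, Rle_mult_inv_pos; nra.
Qed.

Definition p_fair (e : R) : R := (1 + e) / 2.
Definition p_det (e : R) : R := 1 - e / 2.

Lemma bmean_p_fair x : bmean p_fair x = 0 + 1 * x.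
Proof. unfold bmean, p_fair; field. Qed.

Lemma bmean_p_det x : bmean p_det x = 1 + (-1) * x.
Proof. unfold bmean, p_det; field. Qed.

Lemma delta_mse_p_fair e B :
  0 < B -> delta_mse p_fair 2 (1/2) e B = (e ^ 2 * (B + 15) - 9) / B.
Proof.
  intros HB.
  rewrite (delta_mse_linear_mean _ _ _ _ _ 0 1), !bvar_binary, !bmean_p_fair;
    [| lra | exact bmean_p_fair].
  unfold rc0, rc1; field; lra.
Qed.

Lemma delta_mse_p_det e B :
  0 < B -> delta_mse p_det 2 (1/2) e B = (e ^ 2 * (B + 15) - 22 * e) / B.
Proof.
  intros HB.
  rewrite (delta_mse_linear_mean _ _ _ _ _ 1 (-1)), !bvar_binary, !bmean_p_det;
    [| lra | exact bmean_p_det].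
  unfold rc0, rc1; field; lra.
Qed.

Lemma K0_p_fair : K0 p_fair 2 (1/2) = 9.
Proof. unfold K0, bvar, bmean, rc0, rc1, p_fair; field. Qed.

Lemma K1_p_det : K1 1 2 (1/2) = 22.
Proof. unfold K1, rc0, rc1; field. Qed.

Lemma pos_crossing_p_fair B :
  21 <= B -> pos_crossing p_fair 2 (1/2) 1 B (sqrt (9 / (B + 15))).
Proof.
  intros HB.
  assert (Hpos : 0 < sqrt (9 / (B + 15))) by (apply sqrt_lt_R0, Rdiv_lt_0_compat; lra).
  apply pos_crossing_intro; trivial.
  - assert (Hsmall : sqrt (9 / (B + 15)) <= sqrt (1 / 4)).
    { apply sqrt_le_1_alt, (Rmult_le_reg_r (4 * (B + 15))); [lra|].
      field_simplify; lra. }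
    replace (sqrt (1 / 4)) with (1 / 2) in Hsmall; [lra|].
    symmetry; apply sqrt_lem_1; lra.
  - rewrite delta_mse_p_fair, pos_root_sqr; [field| | |]; lra.
  - intros e' He' Hzero; rewrite delta_mse_p_fair in Hzero by lra.
    apply sqr_eq_pos_root, (div_pos_eq0 _ B); lra.
Qed.

Lemma pos_crossing_p_det B :
  29 <= B -> pos_crossing p_det 2 (1/2) 1 B (22 / (B + 15)).
Proof.
  intros HB.
  apply pos_crossing_intro.
  - apply Rdiv_lt_0_compat; lra.
  - apply (Rmult_le_reg_r (B + 15)); [lra|]. field_simplify; lra.
  - rewrite delta_mse_p_det by lra. field_simplify; lra.
  - intros e' He' Hzero; rewrite delta_mse_p_det in Hzero by lra.
    apply sqr_eq_lin_pos_root, (div_pos_eq0 _ B); lra.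
Qed.

Theorem proposition11 :
  (* (i) *)
  (exists (p : R -> R) (mu0 alpha l pi0 emax : R),
     -1 < mu0 < 1 /\ alpha <> 0 /\ 1 < l /\ 0 < pi0 < 1 /\ 0 < emax /\
     (forall e, 0 <= e <= emax -> 0 <= p e <= 1 /\ bmean p e = mu0 + alpha * e) /\
     0 < bvar p 0 /\
     exists (estar : R -> R) (C B0 : R), 0 < B0 /\
       forall B, B0 <= B ->
         pos_crossing p l pi0 emax B (estar B) /\
         Rabs (estar B - sqrt (K0 p l pi0 / alpha ^ 2) * / sqrt B) <= C * / B)
  /\
  (* (ii) *)
  (exists (p : R -> R) (kappa a pi0 emax : R),
     0 < kappa /\ 1 < a /\ 0 < pi0 < 1 /\ 0 < emax /\
     (forall e, 0 <= e <= emax -> 0 <= p e <= 1 /\ bmean p e = 1 - kappa * e) /\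
     exists (estar : R -> R) (C B0 : R), 0 < B0 /\
       forall B, B0 <= B ->
         pos_crossing p a pi0 emax B (estar B) /\
         Rabs (estar B - K1 kappa a pi0 / kappa ^ 2 * / B) <= C * / B ^ 2).
Proof.
  split.
  - exists p_fair, 0, 1, 2, (1/2), 1.
    do 5 (split; [lra|]).
    split; [intros e He; rewrite bmean_p_fair; unfold p_fair; lra|].
    split; [rewrite bvar_binary, bmean_p_fair; lra|].
    exists (fun B => sqrt (9 / (B + 15))), 45, 21.
    split; [lra|]; intros B HB; split; [apply pos_crossing_p_fair, HB|].
    rewrite K0_p_fair, pow1, Rdiv_1_r, sqrt_div_alt by lra.
    replace (sqrt 9) with 3 by (symmetry; apply sqrt_lem_1; lra).
    unfold Rdiv; rewrite <- Rmult_minus_distr_l, Rabs_mult, Rabs_right by lra.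
    replace (45 * / B) with (3 * (15 / B)) by (unfold Rdiv; ring).
    apply Rmult_le_compat_l, inv_sqrt_shift_bound; lra.
  - exists p_det, 1, 2, (1/2), 1.
    do 4 (split; [lra|]).
    split; [intros e He; rewrite bmean_p_det; unfold p_det; lra|].
    exists (fun B => 22 / (B + 15)), 330, 29.
    split; [lra|]; intros B HB; split; [apply pos_crossing_p_det, HB|].
    rewrite K1_p_det, pow1, Rdiv_1_r.
    replace (330 * / B ^ 2) with (22 * 15 / B ^ 2) by (unfold Rdiv; ring).
    apply inv_shift_bound; lra.
Qed.
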